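(* For any sequence of groups $(G_n)_{n\in\mathbb N}$, the archipelago group $\mathcal A(G_n)$ has no infinite cyclic quotient; equivalently, $\mathrm{Hom}(\mathcal A(G_n),\mathbb Z)$ is trivial.
   Context: For a sequence of groups $(G_n)_{n\in\mathbb N}$, an infinite word is a map $w:L\to\bigsqcup_n (G_n\setminus\{1\})$ from a countable linearly ordered set $L$ such that $w^{-1}(G_n)$ is finite for every $n$. Two infinite words are equivalent if for every $m$ their restrictions to the letters from $G_1,\dots,G_m$ represent the same element of $G_1*\cdots*G_m$. The topologist's product $\circledast_n G_n$ is the group of equivalence classes, with multiplication induced by concatenation and inversion by reversing the order and inverting each letter. The free product $*_n G_n$ is the subgroup of classes of finite words. The archipelago group is $\mathcal A(G_n):=\circledast_n G_n/\langle\langle *_n G_n\rangle\rangle$ (quotient by the normal closure). *)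

From Stdlib Require Import List ZArith Lia Sorting.Sorted Relations.Relation_Operators.
Import ListNotations.
Set Implicit Arguments.

Record group := Group {
  gcar : Type;
  gmul : gcar -> gcar -> gcar;
  ginv : gcar -> gcar;
  gone : gcar;
  gmulA : forall x y z, gmul x (gmul y z) = gmul (gmul x y) z;
  gmul1l : forall x, gmul gone x = x;
  gmul1r : forall x, gmul x gone = x;
  gmulVl : forall x, gmul (ginv x) x = gone;
  gmulVr : forall x, gmul x (ginv x) = gone }.

Lemma ginv_ne1 (H : group) (g : gcar H) : g <> gone H -> ginv H g <> gone H.
Proof.
  intros Hg E; apply Hg.
  rewrite <- (gmul1l H g). rewrite <- E at 1. apply gmulVl.
Qed.

Section Archipelago.
Variable G : nat -> group.

Definition letter := { n : nat & gcar (G n) }.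

(** Infinite words: maps from a countable linearly ordered set L to the
    disjoint union of the G_n \ {1}, with finite preimage of each G_n. *)
Record iword := IWord {
  wL : Type;
  wlt : wL -> wL -> Prop;
  wlt_irr : forall x, ~ wlt x x;
  wlt_trans : forall x y z, wlt x y -> wlt y z -> wlt x z;
  wlt_total : forall x y, x = y \/ wlt x y \/ wlt y x;
  wcount : exists f : wL -> nat, forall x y, f x = f y -> x = y;
  wlet : wL -> letter;
  wlet_ne1 : forall x, projT2 (wlet x) <> gone (G (projT1 (wlet x)));
  wfin : forall n, exists ps : list wL, forall x, projT1 (wlet x) = n -> In x ps }.

(** Equality in the free product of the G_n: the congruence on finite words
    generated by deleting an identity letter and merging two adjacent
    letters of the same group. *)
Inductive fstep : list letter -> list letter -> Prop :=
| fs_one u v n : fstep (u ++ existT _ n (gone (G n)) :: v) (u ++ v)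
| fs_mul u v n (a b : gcar (G n)) :
    fstep (u ++ existT _ n a :: existT _ n b :: v) (u ++ existT _ n (gmul _ a b) :: v).

Definition feq : list letter -> list letter -> Prop := clos_refl_sym_trans _ fstep.

Definition listing (w : iword) (m : nat) (ps : list (wL w)) : Prop :=
  NoDup ps /\ Sorted (wlt w) ps /\ (forall x, In x ps <-> projT1 (wlet w x) < m).

(** Equivalence of infinite words (equality in the topologist's product). *)
Definition weqv (w v : iword) : Prop :=
  forall m ps qs, listing w m ps -> listing v m qs ->
    feq (map (wlet w) ps) (map (wlet v) qs).

Definition sum_lt {A B : Type} (ra : A -> A -> Prop) (rb : B -> B -> Prop)
  (x y : A + B) : Prop :=
  match x, y with
  | inl a, inl a' => ra a a'
  | inl _, inr _ => True
  | inr _, inl _ => False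
  | inr b, inr b' => rb b b'
  end.

Definition sum_let (w v : iword) (x : wL w + wL v) : letter :=
  match x with inl a => wlet w a | inr b => wlet v b end.

Lemma sum_lt_irr (w v : iword) x : ~ sum_lt (wlt w) (wlt v) x x.
Proof. destruct x; simpl; [apply wlt_irr | apply wlt_irr]. Qed.

Lemma sum_lt_trans (w v : iword) x y z :
  sum_lt (wlt w) (wlt v) x y -> sum_lt (wlt w) (wlt v) y z -> sum_lt (wlt w) (wlt v) x z.
Proof.
  destruct x, y, z; simpl; try tauto; apply wlt_trans.
Qed.

Lemma sum_lt_total (w v : iword) x y :
  x = y \/ sum_lt (wlt w) (wlt v) x y \/ sum_lt (wlt w) (wlt v) y x.
Proof.
  destruct x as [a|b], y as [a'|b']; simpl; auto.
  - destruct (wlt_total w a a') as [->|[H|H]]; auto.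
  - destruct (wlt_total v b b') as [->|[H|H]]; auto.
Qed.

Lemma sum_count (w v : iword) :
  exists f : wL w + wL v -> nat, forall x y, f x = f y -> x = y.
Proof.
  destruct (wcount w) as [f Hf], (wcount v) as [g Hg].
  exists (fun x => match x with inl a => 2 * f a | inr b => S (2 * g b) end).
  intros [a|b] [a'|b'] E; try lia.
  - rewrite (Hf a a'); auto; lia.
  - rewrite (Hg b b'); auto; lia.
Qed.

Lemma sum_let_ne1 (w v : iword) x :
  projT2 (sum_let w v x) <> gone (G (projT1 (sum_let w v x))).
Proof. destruct x; simpl; apply wlet_ne1. Qed.

Lemma sum_fin (w v : iword) n :
  exists ps : list (wL w + wL v), forall x, projT1 (sum_let w v x) = n -> In x ps.
Proof.
  destruct (wfin w n) as [p Hp], (wfin v n) as [q Hq].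
  exists (map inl p ++ map inr q). intros [a|b] H; apply in_or_app; simpl in H.
  - left; apply in_map; auto.
  - right; apply in_map; auto.
Qed.

Definition wmul (w v : iword) : iword :=
  @IWord (wL w + wL v) (sum_lt (wlt w) (wlt v))
    (@sum_lt_irr w v) (@sum_lt_trans w v) (@sum_lt_total w v) (sum_count w v)
    (sum_let w v) (@sum_let_ne1 w v) (@sum_fin w v).

Definition inv_let (w : iword) (x : wL w) : letter :=
  existT _ (projT1 (wlet w x)) (ginv _ (projT2 (wlet w x))).

Lemma inv_let_ne1 (w : iword) x :
  projT2 (inv_let w x) <> gone (G (projT1 (inv_let w x))).
Proof. simpl; apply ginv_ne1, wlet_ne1. Qed.

Lemma inv_fin (w : iword) n :
  exists ps : list (wL w), forall x, projT1 (inv_let w x) = n -> In x ps.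
Proof. apply (wfin w n). Qed.

Definition winv (w : iword) : iword :=
  @IWord (wL w) (fun x y => wlt w y x)
    (fun x => wlt_irr w x) (fun x y z H1 H2 => wlt_trans w z y x H2 H1)
    (fun x y => match wlt_total w x y with
                | or_introl e => or_introl e
                | or_intror (or_introl h) => or_intror (or_intror h)
                | or_intror (or_intror h) => or_intror (or_introl h)
                end)
    (wcount w) (inv_let w) (@inv_let_ne1 w) (@inv_fin w).

Definition finite_word (w : iword) : Prop :=
  exists ps : list (wL w), forall x, In x ps.

(** The normal closure of the free product inside the topologist's product. *)
Inductive NC : iword -> Prop :=
| nc_fin w : finite_word w -> NC w
| nc_eqv w v : weqv w v -> NC w -> NC v
| nc_mul w v : NC w -> NC v -> NC (wmul w v)
| nc_inv w : NC w -> NC (winv w)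
| nc_conj g w : NC w -> NC (wmul (wmul g w) (winv g)).

(** Equality in the archipelago group A(G_n) = (topologist's product) / NC. *)
Definition arch_eq (w v : iword) : Prop := NC (wmul w (winv v)).

End Archipelago.

(* Fix a word w and put m := |phi w| + 2.  For every k let Y_k be the word
   whose letters are the letters x of w tagged with a string l over
   {0, ..., m-1} of length at most index x - k, in lexicographic order with the
   empty string first.  Then Y_k is the concatenation of w restricted to the
   letters of index >= k (which differs from w by finitely many letters)
   followed by m copies of Y_(k+1), so phi Y_k = phi w + m * phi Y_(k+1).
   Hence (m - 1) * phi Y_0 + phi w is divisible by every power of m, so it is
   0, and |phi w| < m - 1 then forces phi w = 0. *)
From Stdlib Require Import List ZArith Lia Sorting.Sorted Relations.Relation_Operators.
From Stdlib Require Import Cantor ProofIrrelevance Classical FinFun.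
Import ListNotations.
Set Implicit Arguments.

Section StronglySortedLists.
Variable A : Type.
Variable R : A -> A -> Prop.

Lemma StronglySorted_eq (R_irr : forall x, ~ R x x)
    (R_trans : forall x y z, R x y -> R y z -> R x z) (l1 l2 : list A) :
  StronglySorted R l1 -> StronglySorted R l2 ->
  (forall x, In x l1 <-> In x l2) -> l1 = l2.
Proof.
  revert l2; induction l1 as [|a l1 IH]; intros [|b l2] H1 H2 He.
  - reflexivity.
  - exfalso; apply (proj2 (He b)); simpl; auto.
  - exfalso; apply (proj1 (He a)); simpl; auto.
  - apply StronglySorted_inv in H1 as [H1 F1].
    apply StronglySorted_inv in H2 as [H2 F2].
    rewrite Forall_forall in F1, F2.
    assert (a = b) as <-.
    { destruct (proj1 (He a) (or_introl eq_refl)) as [e|Ha]; [auto|].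
      destruct (proj2 (He b) (or_introl eq_refl)) as [e|Hb]; exfalso.
      + subst; exact (R_irr _ (F2 _ Ha)).
      + exact (R_irr _ (R_trans _ _ _ (F1 _ Hb) (F2 _ Ha))). }
    f_equal; apply IH; auto.
    intros x; split; intros Hx.
    + destruct (proj1 (He x) (or_intror Hx)) as [<-|h]; auto.
      exfalso; exact (R_irr _ (F1 _ Hx)).
    + destruct (proj2 (He x) (or_intror Hx)) as [<-|h]; auto.
      exfalso; exact (R_irr _ (F2 _ Hx)).
Qed.

Lemma StronglySorted_app (l1 l2 : list A) :
  StronglySorted R l1 -> StronglySorted R l2 ->
  (forall x y, In x l1 -> In y l2 -> R x y) -> StronglySorted R (l1 ++ l2).
Proof.
  induction l1 as [|a l1 IH]; simpl; intros H1 H2 H; auto.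
  apply StronglySorted_inv in H1 as [H1 F1].
  constructor; auto.
  apply Forall_app; split; auto.
  apply Forall_forall; auto.
Qed.

Lemma StronglySorted_rev (l : list A) :
  StronglySorted (fun x y => R y x) l -> StronglySorted R (rev l).
Proof.
  induction l as [|a l IH]; simpl; intros H; [constructor|].
  apply StronglySorted_inv in H as [H F].
  apply StronglySorted_app; auto; [repeat constructor|].
  intros x y Hx [<-|[]]. apply in_rev in Hx.
  exact (proj1 (Forall_forall _ _) F x Hx).
Qed.

Lemma StronglySorted_map (B : Type) (S : B -> B -> Prop) (f : A -> B) (l : list A) :
  (forall x y, R x y -> S (f x) (f y)) ->
  StronglySorted R l -> StronglySorted S (map f l).
Proof.
  intros Hf; induction l as [|a l IH]; simpl; intros H; [constructor|].
  apply StronglySorted_inv in H as [H F]. constructor; auto.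
  apply Forall_map. eapply Forall_impl; [|exact F]. auto.
Qed.

End StronglySortedLists.

Section SumLists.
Variables A B : Type.

Fixpoint lefts (l : list (A + B)) : list A :=
  match l with [] => [] | inl a :: r => a :: lefts r | inr _ :: r => lefts r end.
Fixpoint rights (l : list (A + B)) : list B :=
  match l with [] => [] | inl _ :: r => rights r | inr b :: r => b :: rights r end.

Lemma in_lefts (l : list (A + B)) a : In a (lefts l) <-> In (inl a) l.
Proof.
  induction l as [|[x|x] l IH]; simpl; [tauto| |].
  - split; intros [H|H]; try (left; congruence); right; apply IH; auto.
  - rewrite IH; split; [auto|intros [H|H]; [discriminate|auto]].
Qed.

Lemma in_rights (l : list (A + B)) b : In b (rights l) <-> In (inr b) l.
Proof.
  induction l as [|[x|x] l IH]; simpl; [tauto| |].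
  - rewrite IH; split; [auto|intros [H|H]; [discriminate|auto]].
  - split; intros [H|H]; try (left; congruence); right; apply IH; auto.
Qed.

Lemma NoDup_lefts (l : list (A + B)) : NoDup l -> NoDup (lefts l).
Proof.
  induction l as [|[x|x] l IH]; simpl; intros H; inversion H; subst; auto.
  - constructor.
  - constructor; auto. rewrite in_lefts; auto.
Qed.

Lemma NoDup_rights (l : list (A + B)) : NoDup l -> NoDup (rights l).
Proof.
  induction l as [|[x|x] l IH]; simpl; intros H; inversion H; subst; auto.
  - constructor.
  - constructor; auto. rewrite in_rights; auto.
Qed.

Variables (ra : A -> A -> Prop) (rb : B -> B -> Prop).

Lemma StronglySorted_lefts (l : list (A + B)) :
  StronglySorted (sum_lt ra rb) l -> StronglySorted ra (lefts l).
Proof.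
  induction l as [|[x|x] l IH]; simpl; intros H; [constructor| |];
    apply StronglySorted_inv in H as [H F]; auto.
  constructor; auto. apply Forall_forall; intros y Hy.
  apply in_lefts in Hy. exact (proj1 (Forall_forall _ _) F _ Hy).
Qed.

Lemma StronglySorted_rights (l : list (A + B)) :
  StronglySorted (sum_lt ra rb) l -> StronglySorted rb (rights l).
Proof.
  induction l as [|[x|x] l IH]; simpl; intros H; [constructor| |];
    apply StronglySorted_inv in H as [H F]; auto.
  constructor; auto. apply Forall_forall; intros y Hy.
  apply in_rights in Hy. exact (proj1 (Forall_forall _ _) F _ Hy).
Qed.

Lemma StronglySorted_sum_split (l : list (A + B)) :
  StronglySorted (sum_lt ra rb) l -> l = map inl (lefts l) ++ map inr (rights l).
Proof.
  induction l as [|[x|x] l IH]; simpl; intros H; auto;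
    apply StronglySorted_inv in H as [H F].
  - rewrite <- IH; auto.
  - assert (Hl : lefts l = []).
    { clear IH H; induction l as [|[y|y] l IHl]; simpl; inversion F; subst; auto.
      contradiction. }
    rewrite Hl; simpl; f_equal. rewrite (IH H), Hl at 1. reflexivity.
Qed.

End SumLists.

Section FreeProduct.
Variable G : nat -> group.

Definition letter_inv (x : letter G) : letter G :=
  existT _ (projT1 x) (ginv _ (projT2 x)).
Definition word_inv (l : list (letter G)) : list (letter G) := rev (map letter_inv l).

Lemma feq_app_l (a l l' : list (letter G)) : feq l l' -> feq (a ++ l) (a ++ l').
Proof.
  induction 1 as [l l' Hs| | |]; [|apply rst_refl|apply rst_sym; auto|eapply rst_trans; eauto].
  apply rst_step; destruct Hs; rewrite !app_assoc; constructor.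
Qed.

Lemma feq_app_r (b l l' : list (letter G)) : feq l l' -> feq (l ++ b) (l' ++ b).
Proof.
  induction 1 as [l l' Hs| | |]; [|apply rst_refl|apply rst_sym; auto|eapply rst_trans; eauto].
  apply rst_step; destruct Hs; rewrite <- !app_assoc; constructor.
Qed.

Lemma feq_app_word_inv (l : list (letter G)) : feq (l ++ word_inv l) [].
Proof.
  induction l as [|[n g] l IH]; [apply rst_refl|].
  unfold word_inv; simpl; fold (word_inv l); rewrite app_assoc.
  change (feq ([existT _ n g] ++ (l ++ word_inv l) ++ [letter_inv (existT _ n g)]) []).
  eapply rst_trans; [apply feq_app_l, feq_app_r, IH|].
  eapply rst_trans; [apply rst_step, (fs_mul G [] [] n g (ginv _ g))|].
  simpl; rewrite gmulVr. apply rst_step, (fs_one G [] [] n).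
Qed.

End FreeProduct.

Section Words.
Variable G : nat -> group.

Definition index {w : iword G} (x : wL w) : nat := projT1 (wlet w x).

Definition empty_word : iword G.
Proof.
  refine (@IWord G Empty_set (fun _ _ => False) _ _ _ _ (fun x => match x with end) _ _).
  - tauto.
  - tauto.
  - intros [].
  - exists (fun _ => 0); intros [].
  - intros [].
  - intros n; exists []; intros [].
Defined.

Lemma listing_StronglySorted (w : iword G) m ps :
  listing w m ps -> StronglySorted (wlt w) ps.
Proof.
  intros [_ [H _]]. apply Sorted_StronglySorted; auto. exact (wlt_trans w).
Qed.

Lemma listing_unique (w : iword G) m ps qs : listing w m ps -> listing w m qs -> ps = qs.
Proof.
  intros H1 H2. apply (StronglySorted_eq (wlt_irr w) (wlt_trans w));
    [eapply listing_StronglySorted; eauto|eapply listing_StronglySorted; eauto|].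
  intros x. destruct H1 as [_ [_ H1]], H2 as [_ [_ H2]]. rewrite H1, H2; tauto.
Qed.

Lemma sig_eq (T : Type) (C : T -> Prop) (a b : {p | C p}) : proj1_sig a = proj1_sig b -> a = b.
Proof. destruct a, b; simpl; intros; apply subset_eq_compat; auto. Qed.

Lemma finite_sig_cover (T : Type) (C : T -> Prop) (P : {p | C p} -> Prop) (l : list T) :
  (forall p, P p -> In (proj1_sig p) l) -> exists ps : list {p | C p}, forall p, P p -> In p ps.
Proof.
  revert P; induction l as [|a l IH]; intros P H.
  - exists []. intros p Hp; apply (H p Hp).
  - destruct (IH (fun p => P p /\ proj1_sig p <> a)) as [ps Hps].
    { intros p [Hp Hn]. destruct (H p Hp); [congruence|auto]. }
    destruct (classic (C a)) as [Ca|nCa].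
    + exists (exist _ a Ca :: ps). intros [p cp] Hp.
      destruct (classic (p = a)) as [->|ne].
      * left. apply subset_eq_compat; auto.
      * right. apply Hps; auto.
    + exists ps. intros [p cp] Hp. apply Hps; split; auto. simpl; intros ->; contradiction.
Qed.

Definition restrict_word (u : iword G) (P : wL u -> Prop) : iword G.
Proof.
  refine (@IWord G {x | P x} (fun a b => wlt u (proj1_sig a) (proj1_sig b)) _ _ _ _
            (fun a => wlet u (proj1_sig a)) _ _).
  - intros a; apply wlt_irr.
  - intros a b c; apply wlt_trans.
  - intros a b. destruct (wlt_total u (proj1_sig a) (proj1_sig b)) as [e|h]; auto.
    left; apply sig_eq; auto.
  - destruct (wcount u) as [f Hf]. exists (fun a => f (proj1_sig a)).
    intros a b e; apply sig_eq; auto.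
  - intros a; apply wlet_ne1.
  - intros n. destruct (wfin u n) as [l Hl].
    apply (@finite_sig_cover _ P (fun a => projT1 (wlet u (proj1_sig a)) = n) l).
    intros p Hp; apply Hl; auto.
Defined.

End Words.

Section Homomorphism.
Variable G : nat -> group.
Variable phi : iword G -> Z.
Hypothesis phi_wd : forall w v, arch_eq w v -> phi w = phi v.
Hypothesis phi_hom : forall w v, phi (wmul w v) = (phi w + phi v)%Z.

(* v ~ u means that v * u^-1 has the same finite projections as the empty
   word, so it lies in the normal closure of the free product. *)
Lemma phi_weqv (v u : iword G) : weqv v u -> phi v = phi u.
Proof.
  intros Hw. apply phi_wd. unfold arch_eq.
  apply nc_eqv with (w := empty_word G); [|apply nc_fin; exists []; intros []].
  intros m ps rs Hps Hrs.
  destruct ps as [|[]]; simpl.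
  pose proof (listing_StronglySorted Hrs) as Hss.
  rewrite (StronglySorted_sum_split Hss), map_app, !map_map; simpl.
  destruct Hrs as [Hn [_ Hi]].
  assert (Lv : listing v m (lefts rs)).
  { split; [|split].
    - apply NoDup_lefts; auto.
    - apply StronglySorted_Sorted, (StronglySorted_lefts Hss).
    - intros x. rewrite in_lefts, Hi. simpl; tauto. }
  assert (Lu : listing u m (rev (rights rs))).
  { split; [|split].
    - apply NoDup_rev, NoDup_rights; auto.
    - apply StronglySorted_Sorted, StronglySorted_rev, (StronglySorted_rights Hss).
    - intros x. rewrite <- in_rev, in_rights, Hi. simpl; tauto. }
  assert (E : map (inv_let u) (rights rs) = word_inv (map (wlet u) (rev (rights rs))))
    by (unfold word_inv; rewrite map_map, map_rev, rev_involutive; reflexivity).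
  change (feq [] (map (wlet v) (lefts rs) ++ map (inv_let u) (rights rs))).
  rewrite E; apply rst_sym.
  eapply rst_trans; [apply feq_app_r, (Hw m _ _ Lv Lu)|].
  apply feq_app_word_inv.
Qed.

Lemma phi_finite_word (w : iword G) : finite_word w -> phi w = 0%Z.
Proof.
  assert (Hfin : forall v, finite_word v -> phi v = phi (empty_word G)).
  { intros v [ps Hps]. apply phi_wd, nc_fin.
    exists (map inl ps). intros [a|[]]. apply in_map, Hps. }
  intros Hw. rewrite (Hfin w Hw).
  assert (E : phi (wmul (empty_word G) (empty_word G)) = phi (empty_word G)).
  { apply Hfin. exists []. intros [[]|[]]. }
  rewrite phi_hom in E. lia.
Qed.

Lemma phi_word_iso (v u : iword G) (f : wL v -> wL u) :
  (forall x y, f x = f y -> x = y) -> (forall y, exists x, f x = y) ->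
  (forall x y, wlt v x y -> wlt u (f x) (f y)) -> (forall x, wlet u (f x) = wlet v x) ->
  phi v = phi u.
Proof.
  intros Hi Hs Ho Hl. apply phi_weqv.
  intros m ps qs Hps Hqs.
  assert (L : listing u m (map f ps)).
  { pose proof (listing_StronglySorted Hps) as Hss.
    destruct Hps as [Hn [_ Hm]]. split; [|split].
    - apply Injective_map_NoDup; auto.
    - apply StronglySorted_Sorted, StronglySorted_map with (R := wlt v); auto.
    - intros y. destruct (Hs y) as [x <-]. rewrite Hl, <- Hm. split.
      + intros H. apply in_map_iff in H as [x' [E H]]. apply Hi in E; subst; auto.
      + apply in_map. }
  rewrite (listing_unique Hqs L), map_map.
  erewrite map_ext; [apply rst_refl|]. auto.
Qed.

Lemma phi_restrict_full (u : iword G) (P : wL u -> Prop) :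
  (forall x, P x) -> phi (restrict_word u P) = phi u.
Proof.
  intros HP. apply phi_word_iso with (f := @proj1_sig _ _); simpl; auto.
  - intros; apply sig_eq; auto.
  - intros y; exists (exist _ y (HP y)); auto.
Qed.

Lemma phi_restrict_ext (u : iword G) (P Q : wL u -> Prop) :
  (forall x, P x <-> Q x) -> phi (restrict_word u P) = phi (restrict_word u Q).
Proof.
  intros HP.
  apply phi_word_iso with
    (f := fun a => exist Q (proj1_sig a) (proj1 (HP _) (proj2_sig a)) : wL (restrict_word u Q));
    simpl; auto.
  - intros a b e; apply sig_eq. apply (f_equal (@proj1_sig _ _)) in e; auto.
  - intros [y q]; exists (exist _ y (proj2 (HP y) q)); apply sig_eq; auto.
Qed.

Lemma phi_restrict_split (u : iword G) (P Q R : wL u -> Prop) :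
  (forall x, P x <-> Q x \/ R x) -> (forall x y, Q x -> R y -> wlt u x y) ->
  phi (restrict_word u P) = (phi (restrict_word u Q) + phi (restrict_word u R))%Z.
Proof.
  intros HP Ho. rewrite <- phi_hom. symmetry.
  pose (f := fun s : wL (wmul (restrict_word u Q) (restrict_word u R)) =>
    match s return wL (restrict_word u P) with
    | inl a => exist P (proj1_sig a) (proj2 (HP _) (or_introl (proj2_sig a)))
    | inr b => exist P (proj1_sig b) (proj2 (HP _) (or_intror (proj2_sig b)))
    end).
  apply phi_word_iso with (f := f).
  - intros [[a qa]|[a ra]] [[b qb]|[b rb]]; simpl; intros e;
      apply (f_equal (@proj1_sig _ _)) in e; simpl in e; subst.
    + f_equal; apply sig_eq; auto.
    + exfalso; exact (wlt_irr u _ (Ho _ _ qa rb)).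
    + exfalso; exact (wlt_irr u _ (Ho _ _ qb ra)).
    + f_equal; apply sig_eq; auto.
  - intros [y py]. destruct (proj1 (HP y) py) as [q|r].
    + exists (inl (exist _ y q)); apply sig_eq; auto.
    + exists (inr (exist _ y r)); apply sig_eq; auto.
  - intros [[a qa]|[a ra]] [[b qb]|[b rb]]; simpl; auto; tauto.
  - intros [[a qa]|[a ra]]; reflexivity.
Qed.

Lemma phi_restrict_singleton (u : iword G) (y : wL u) :
  phi (restrict_word u (fun x => x = y)) = 0%Z.
Proof.
  apply phi_finite_word. exists [exist (fun x => x = y) y eq_refl].
  intros [x ->]; left; apply sig_eq; reflexivity.
Qed.

Lemma phi_restrict_cofinite (u : iword G) (l : list (wL u)) (P : wL u -> Prop) :
  (forall x, ~ P x -> In x l) -> phi (restrict_word u P) = phi u.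
Proof.
  revert P; induction l as [|y l IH]; intros P HP.
  { apply phi_restrict_full. intros x; apply NNPP; intros H; exact (HP x H). }
  rewrite <- (IH (fun x => P x \/ x = y)).
  2:{ intros x H. destruct (HP x ltac:(tauto)) as [e|h]; [subst; tauto|auto]. }
  destruct (classic (P y)) as [Py|nPy].
  { apply phi_restrict_ext. intros x; split; auto. intros [h| ->]; auto. }
  pose (before := fun x => P x /\ wlt u x y).
  pose (after := fun x => P x /\ wlt u y x).
  assert (Htri : forall x, P x -> before x \/ after x).
  { intros x Px; unfold before, after.
    destruct (wlt_total u x y) as [->|[h|h]]; tauto. }
  rewrite (phi_restrict_split u (fun x => P x \/ x = y) before (fun x => x = y \/ after x)).
  2:{ intros x; split.
      - intros [Px| ->]; [destruct (Htri x Px)|]; auto.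
      - unfold before, after; tauto. }
  2:{ intros x z [_ h] [->|[_ h']]; auto. eapply wlt_trans; eauto. }
  rewrite (phi_restrict_split u (fun x => x = y \/ after x) (fun x => x = y) after),
    phi_restrict_singleton by (unfold after; intuition; subst; tauto).
  rewrite (phi_restrict_split u P before after); [lia| |].
  - intros x; split; [apply Htri|unfold before, after; tauto].
  - intros x z [_ h] [_ h']. eapply wlt_trans; eauto.
Qed.

Lemma phi_restrict_index_ge (w : iword G) (k : nat) :
  phi (restrict_word w (fun x => k <= index x)) = phi w.
Proof.
  assert (exists l, forall x : wL w, index x < k -> In x l) as [l Hl].
  { induction k as [|k [l Hl]].
    - exists []; intros; lia.
    - destruct (wfin w k) as [l' Hl']. exists (l ++ l'). intros x Hx.
      apply in_or_app. destruct (Nat.eq_dec (index x) k); [right; apply Hl'; auto|left; apply Hl; lia]. }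
  apply (phi_restrict_cofinite w l). intros x Hx; apply Hl; lia.
Qed.

End Homomorphism.

Section LexOrder.
Variables (X : Type) (r : X -> X -> Prop).

Fixpoint lex_lt (l1 : list nat) (x1 : X) (l2 : list nat) (x2 : X) : Prop :=
  match l1, l2 with
  | [], [] => r x1 x2
  | [], _ :: _ => True
  | _ :: _, [] => False
  | i :: l1', j :: l2' => i < j \/ (i = j /\ lex_lt l1' x1 l2' x2)
  end.

Lemma lex_lt_irr (r_irr : forall x, ~ r x x) l x : ~ lex_lt l x l x.
Proof. induction l; simpl; [apply r_irr|]. intros [h|[_ h]]; [lia|auto]. Qed.

Lemma lex_lt_trans (r_trans : forall x y z, r x y -> r y z -> r x z) l1 x1 l2 x2 l3 x3 :
  lex_lt l1 x1 l2 x2 -> lex_lt l2 x2 l3 x3 -> lex_lt l1 x1 l3 x3.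
Proof.
  revert x1 l2 x2 l3 x3.
  induction l1 as [|i l1 IH]; intros x1 [|j l2] x2 [|k l3] x3; simpl; try tauto.
  - apply r_trans.
  - intros [h|[e h]] [h'|[e' h']]; subst; try (left; lia). right; split; eauto.
Qed.

Lemma lex_lt_total (r_total : forall x y, x = y \/ r x y \/ r y x) l1 x1 l2 x2 :
  (l1, x1) = (l2, x2) \/ lex_lt l1 x1 l2 x2 \/ lex_lt l2 x2 l1 x1.
Proof.
  revert x1 l2 x2.
  induction l1 as [|i l1 IH]; intros x1 [|j l2] x2; simpl; auto.
  - destruct (r_total x1 x2) as [->|h]; auto.
  - destruct (lt_eq_lt_dec i j) as [[h|<-]|h]; auto.
    destruct (IH x1 l2 x2) as [e|[h|h]]; auto.
    left; injection e; intros; subst; auto.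
Qed.

End LexOrder.

Fixpoint code_list (l : list nat) : nat :=
  match l with [] => 0 | a :: r => S (Cantor.to_nat (a, code_list r)) end.

Lemma code_list_inj l1 l2 : code_list l1 = code_list l2 -> l1 = l2.
Proof.
  revert l2; induction l1 as [|a l1 IH]; intros [|b l2]; cbn [code_list];
    try discriminate; auto.
  intros e. apply Nat.succ_inj, Cantor.to_nat_inj in e.
  injection e; intros; subst; f_equal; auto.
Qed.

Fixpoint bounded_strings (m n : nat) : list (list nat) :=
  match n with
  | 0 => [[]]
  | S n => [] :: flat_map (fun i => map (cons i) (bounded_strings m n)) (seq 0 m)
  end.

Lemma in_bounded_strings m n l :
  Forall (fun i => i < m) l -> length l <= n -> In l (bounded_strings m n).
Proof.
  revert l; induction n as [|n IH]; intros [|i l] Hf Hl; simpl in *; auto; try lia.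
  right. inversion Hf; subst. apply in_flat_map. exists i; split.
  - apply in_seq; lia.
  - apply in_map, IH; auto; lia.
Qed.

Section NestedWord.
Variable G : nat -> group.
Variables (w : iword G) (m : nat).

(* The length bound is what keeps only finitely many letters of each G_n. *)
Definition nested_pos (k : nat) (p : list nat * wL w) : Prop :=
  Forall (fun i => i < m) (fst p) /\ k + length (fst p) <= index (snd p).

Definition nested_word (k : nat) : iword G.
Proof.
  refine (@IWord G {p | nested_pos k p}
    (fun a b => lex_lt (wlt w) (fst (proj1_sig a)) (snd (proj1_sig a))
                                (fst (proj1_sig b)) (snd (proj1_sig b)))
    _ _ _ _ (fun a => wlet w (snd (proj1_sig a))) _ _).
  - intros a; apply lex_lt_irr, wlt_irr.
  - intros a b c; apply lex_lt_trans, wlt_trans.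
  - intros [[l x] ?] [[l' x'] ?]; simpl.
    destruct (lex_lt_total (wlt w) (wlt_total w) l x l' x') as [e|h]; auto.
    left; apply sig_eq; auto.
  - destruct (wcount w) as [f Hf].
    exists (fun a => code_list (f (snd (proj1_sig a)) :: fst (proj1_sig a))).
    intros [[l x] ?] [[l' x'] ?] e; apply sig_eq.
    apply code_list_inj in e; simpl in *; injection e; intros e1 e2.
    apply Hf in e2; subst; auto.
  - intros a; apply wlet_ne1.
  - intros n. destruct (wfin w n) as [xs Hxs].
    apply (@finite_sig_cover _ (nested_pos k) (fun a => projT1 (wlet w (snd (proj1_sig a))) = n)
             (list_prod (bounded_strings m n) xs)).
    intros [[l x] [Hf Hl]] Hn; simpl in *. apply in_prod.
    + apply in_bounded_strings; auto. unfold index in Hl; lia.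
    + apply Hxs; auto.
Defined.

Variable phi : iword G -> Z.
Hypothesis phi_wd : forall w v, arch_eq w v -> phi w = phi v.
Hypothesis phi_hom : forall w v, phi (wmul w v) = (phi w + phi v)%Z.

Lemma phi_nested_word_nil k :
  phi (restrict_word (nested_word k) (fun a => fst (proj1_sig a) = [])) = phi w.
Proof.
  rewrite <- (phi_restrict_index_ge phi phi_wd phi_hom w k).
  assert (Hpos : forall a : {x : wL w | k <= index x}, nested_pos k ([], proj1_sig a)).
  { intros a; split; simpl; [constructor|destruct a; simpl; lia]. }
  symmetry.
  apply (phi_word_iso phi phi_wd)
    with (f := fun a => exist _ (exist _ ([], proj1_sig a) (Hpos a)) eq_refl
               : wL (restrict_word (nested_word k) (fun a => fst (proj1_sig a) = []))).
  - intros a b e. apply (f_equal (@proj1_sig _ _)), (f_equal (@proj1_sig _ _)) in e.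
    apply sig_eq; injection e; auto.
  - intros [[[[|i l] x] [Hf Hl]] e]; simpl in e; [|discriminate].
    assert (h : k <= index x) by (simpl in Hl; lia).
    exists (exist _ x h). apply sig_eq, sig_eq; reflexivity.
  - intros a b h; exact h.
  - reflexivity.
Qed.

Lemma phi_nested_word_cons k j : j < m ->
  phi (restrict_word (nested_word k) (fun a => hd_error (fst (proj1_sig a)) = Some j))
  = phi (nested_word (S k)).
Proof.
  intros Hj.
  assert (Hpos : forall a : wL (nested_word (S k)),
             nested_pos k (j :: fst (proj1_sig a), snd (proj1_sig a))).
  { intros [[l x] [Hf Hl]]; split; simpl in *; [constructor; auto|lia]. }
  symmetry.
  apply (phi_word_iso phi phi_wd)
    with (f := fun a => exist _ (exist _ _ (Hpos a)) eq_refl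
               : wL (restrict_word (nested_word k)
                       (fun a => hd_error (fst (proj1_sig a)) = Some j))).
  - intros [[l x] ?] [[l' x'] ?] e.
    apply (f_equal (@proj1_sig _ _)), (f_equal (@proj1_sig _ _)) in e; simpl in e.
    apply sig_eq; injection e as -> ->; reflexivity.
  - intros [[[[|i l] x] [Hf Hl]] e]; simpl in e; [discriminate|].
    injection e as ->. inversion Hf; subst.
    assert (c : nested_pos (S k) (l, x)) by (split; simpl in *; auto; lia).
    exists (exist _ (l, x) c). apply sig_eq, sig_eq; reflexivity.
  - intros a b h; simpl; right; auto.
  - reflexivity.
Qed.

Lemma phi_nested_word k :
  phi (nested_word k) = (phi w + Z.of_nat m * phi (nested_word (S k)))%Z.
Proof.
  pose (head_lt j (a : wL (nested_word k)) :=
          forall i, hd_error (fst (proj1_sig a)) = Some i -> i < j).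
  assert (Hj : forall j, j <= m -> phi (restrict_word (nested_word k) (head_lt j))
                                   = (phi w + Z.of_nat j * phi (nested_word (S k)))%Z).
  { induction j as [|j IH]; intros Hjm.
    - rewrite <- (phi_nested_word_nil k) at 1. rewrite Z.add_0_r.
      apply (phi_restrict_ext phi phi_wd).
      intros [[[|i l] x] ?]; unfold head_lt; simpl; split; auto; try discriminate.
      intros H; specialize (H i eq_refl); lia.
    - rewrite (phi_restrict_split phi phi_wd phi_hom _ (head_lt (S j)) (head_lt j)
                 (fun a => hd_error (fst (proj1_sig a)) = Some j)).
      + rewrite IH, phi_nested_word_cons by lia. lia.
      + intros [[[|i l] x] ?]; unfold head_lt; simpl; split.
        * left; intros; discriminate.
        * intros _ i' e; discriminate.
        * intros H; specialize (H i eq_refl).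
          destruct (Nat.eq_dec i j) as [->|ne]; [right; auto|left; intros i' [= <-]; lia].
        * intros [H|[= ->]] i' [= <-]; [specialize (H i eq_refl)|]; lia.
      + intros [[[|i l] x] ?] [[[|i' l'] x'] ?]; unfold head_lt; simpl; auto; try discriminate.
        intros H [= ->]. left; apply H; reflexivity. }
  rewrite <- (Hj m (le_n m)).
  symmetry; apply (phi_restrict_full phi phi_wd).
  intros [[[|i l] x] [Hf Hl]] i' e; simpl in *; [discriminate|].
  injection e as <-. inversion Hf; auto.
Qed.

End NestedWord.

Lemma Z_eq0_of_pow_dvd (M c : Z) (f : nat -> Z) :
  (2 <= M)%Z -> (forall k, c = M ^ Z.of_nat k * f k)%Z -> c = 0%Z.
Proof.
  intros HM Hc.
  set (k := Z.to_nat (Z.abs c)).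
  pose proof (Z.pow_gt_lin_r M (Z.of_nat k) ltac:(lia) ltac:(lia)) as Hlin.
  assert (Habs : Z.abs c = (M ^ Z.of_nat k * Z.abs (f k))%Z).
  { rewrite (Hc k) at 1. rewrite Z.abs_mul, (Z.abs_eq (M ^ _)); [reflexivity|].
    apply Z.pow_nonneg; lia. }
  destruct (Z.eq_dec (f k) 0) as [e|ne]; [rewrite (Hc k), e; ring|].
  unfold k in *; nia.
Qed.

(* c_k := (M - 1) b_k + a satisfies c_k = M c_(k+1). *)
Lemma Z_recurrence_eq0 (a : Z) (b : nat -> Z) :
  (forall k, b k = a + (Z.abs a + 2) * b (S k))%Z -> a = 0%Z.
Proof.
  intros Hb. set (M := (Z.abs a + 2)%Z).
  assert (Hc : forall k, ((M - 1) * b 0%nat + a = M ^ Z.of_nat k * ((M - 1) * b k + a))%Z).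
  { induction k as [|k IH]; [cbn [Z.of_nat]; rewrite Z.pow_0_r; ring|].
    rewrite IH, (Hb k), Nat2Z.inj_succ, Z.pow_succ_r by lia. fold M. ring. }
  apply Z_eq0_of_pow_dvd in Hc; [|lia].
  assert (Habs : (Z.abs a = (M - 1) * Z.abs (b 0%nat))%Z).
  { replace a with (- ((M - 1) * b 0%nat))%Z at 1 by lia.
    rewrite Z.abs_opp, Z.abs_mul, (Z.abs_eq (M - 1)); unfold M; lia. }
  destruct (Z.eq_dec (b 0%nat) 0) as [e|ne]; [rewrite e in Hc; lia|].
  unfold M in Habs; nia.
Qed.

Theorem proposition7 (G : nat -> group) (phi : iword G -> Z)
  (phi_wd : forall w v, arch_eq w v -> phi w = phi v)
  (phi_hom : forall w v, phi (wmul w v) = (phi w + phi v)%Z) :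
  forall w : iword G, phi w = 0%Z.
Proof.
  intros w.
  set (m := Z.to_nat (Z.abs (phi w) + 2)).
  apply (Z_recurrence_eq0 _ (fun k => phi (nested_word w m k))).
  intros k. rewrite (phi_nested_word w m phi phi_wd phi_hom).
  unfold m; rewrite Z2Nat.id by lia. reflexivity.
Qed.
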